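(* For every $k\in\mathbb{N}$ and every $\ell\in\{1,\dots,N\}$, \[\mathrm{mR}(\lambda^k_\ell)\le\mathcal{O}\big(|V|^{(|V|+3)(|\Pi|+2)}\big)\quad\text{and}\quad\mathrm{mR}(\lambda^k_{\ge\ell})\le\mathcal{O}\big(|V|^{(|V|+3)(|\Pi|+2)}\big).\]
   Context: Let $\mathcal{G}$ be a quantitative reachability game on an arena $G=(\Pi,V,(V_i)_{i\in\Pi},E)$ (finite player set $\Pi$, finite vertex set $V$ with $|V|\ge2$, $|\Pi|\le|V|$, partition $(V_i)$, every vertex has a successor) with targets $F_i\subseteq V$ and costs $\mathrm{Cost}_i(\rho)=$ least $k$ with $\rho_k\in F_i$ (or $+\infty$); $v_0\in V$. Extended game: arena $X$ with vertices $V^X=V\times2^\Pi$, edges $((v,I),(v',I'))\in E^X$ iff $(v,v')\in E$ and $I'=I\cup\{i:v'\in F_i\}$, $(v,I)\in V^X_i$ iff $v\in V_i$, targets $F^X_i=\{(v,I):i\in I\}$ with corresponding costs; $x_0=(v_0,\{i:v_0\in F_i\})$; $I(u)$ is the second component. $\mathcal{I}$ is the set of $I$ with some $(v,I)$ reachable from $x_0$, $N=|\mathcal{I}|$, $J_1<\dots<J_N$ a fixed total order of $\mathcal{I}$ extending $I<I'$ iff $I\ne I'$ and some $(v',I')$ is reachable from some $(v,I)$. $V^{J_n}=\{(v,J_n):v\in V\}$, $V^{\ge J_n}=\bigcup_{m\ge n}V^{J_m}$. Labelings: for $\lambda:V^X\to\mathbb{N}\cup\{+\infty\}$, a play $\rho$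 of $X$ is $\lambda$-consistent if $\mathrm{Cost}_i(\rho_{\ge n})\le\lambda(\rho_n)$ whenever $\rho_n\in V^X_i$. $\lambda^0(u)=0$ if $u\in V^X_i$ and $i\in I(u)$, else $+\infty$. The update of $\lambda^k$ w.r.t. $V^{\ge J_n}$ keeps values outside $V^{\ge J_n}$ and for $u\in V^{\ge J_n}\cap V^X_i$ sets $\lambda^{k+1}(u)=0$ if $i\in I(u)$, otherwise $1+\min_{(u,u')\in E^X}\sup\{\mathrm{Cost}_i(\rho):\rho$ a $\lambda^k$-consistent play from $u'\}$ ($1+(+\infty)=+\infty$). The sequence $(\lambda^k)$ is generated by $n_0=N$, $\lambda^{k+1}=$ update of $\lambda^k$ w.r.t. $V^{\ge J_{n_k}}$, $n_{k+1}=n_k-1$ if $\lambda^{k+1}=\lambda^k$ and $n_k>1$, else $n_{k+1}=n_k$. $\mathrm{mR}(f)$ is the maximum of the finite values of $f$ ($0$ if none); $\lambda^k_\ell$ and $\lambda^k_{\ge\ell}$ are the restrictions of $\lambda^k$ to $V^{J_\ell}$ and $V^{\ge J_\ell}$. The $\mathcal{O}$ is with respect to the game parameters $|V|,|\Pi|$. *)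

From mathcomp Require Import all_boot.
From Stdlib Require Import ClassicalEpsilon.

Set Implicit Arguments.
Unset Strict Implicit.
Unset Printing Implicit Defensive.

(* Extended naturals N ∪ {+oo}: [Some n] = n, [None] = +oo. *)
Definition enat := option nat.

Definition enat_le (a b : enat) : bool :=
  match a, b with
  | _, None => true
  | None, Some _ => false
  | Some x, Some y => x <= y
  end.

Definition enat_succ (a : enat) : enat :=
  match a with Some n => Some n.+1 | None => None end.

Definition is_lub (S : enat -> Prop) (s : enat) : Prop :=
  (forall x, S x -> enat_le x s) /\
  (forall t, (forall x, S x -> enat_le x t) -> enat_le s t).

Definition is_glb (S : enat -> Prop) (s : enat) : Prop :=
  (forall x, S x -> enat_le s x) /\
  (forall t, (forall x, S x -> enat_le t x) -> enat_le t s).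

Definition enat_sup (S : enat -> Prop) : enat :=
  epsilon (inhabits None) (is_lub S).
Definition enat_inf (S : enat -> Prop) : enat :=
  epsilon (inhabits None) (is_glb S).

Definition least_index (P : pred nat) : enat :=
  match excluded_middle_informative (exists k, P k) with
  | left H => Some (ex_minn H)
  | right _ => None
  end.

Section Game.
Variables (Pl V : finType) (owner : V -> Pl) (E : rel V) (F : Pl -> {set V}).

Definition XV : finType := (V * {set Pl})%type.

Definition Xedge : rel XV := fun u u' =>
  E u.1 u'.1 && (u'.2 == u.2 :|: [set i | u'.1 \in F i]).

Definition Xowner (u : XV) : Pl := owner u.1.

Definition XF (i : Pl) : {set XV} := [set u : XV | i \in u.2].

Definition x0 (v0 : V) : XV := (v0, [set i | v0 \in F i]).

Definition play (r : nat -> XV) : Prop := forall n, Xedge (r n) (r n.+1).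

Definition suffix (r : nat -> XV) (n : nat) : nat -> XV := fun k => r (n + k).

Definition Cost (i : Pl) (r : nat -> XV) : enat :=
  least_index (fun k => r k \in XF i).

Definition consistent (lam : XV -> enat) (r : nat -> XV) : Prop :=
  forall n (i : Pl), Xowner (r n) = i -> enat_le (Cost i (suffix r n)) (lam (r n)).

Definition reachI (v0 : V) : {set {set Pl}} :=
  [set I | [exists v, connect Xedge (x0 v0) (v, I)]].

Definition NN (v0 : V) : nat := #|reachI v0|.

(* J : nat -> {set Pl}, used on indices 1..N, is a fixed total order of I
   extending the reachability order *)
Definition valid_order (v0 : V) (J : nat -> {set Pl}) : Prop :=
  (forall n, 1 <= n <= NN v0 -> J n \in reachI v0) /\
  (forall I, I \in reachI v0 -> exists2 n, 1 <= n <= NN v0 & J n = I) /\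
  (forall m n, 1 <= m <= NN v0 -> 1 <= n <= NN v0 -> J m = J n -> m = n) /\
  (forall m n, 1 <= m <= NN v0 -> 1 <= n <= NN v0 -> J m <> J n ->
     (exists v v', connect Xedge (v, J m) (v', J n)) -> m < n).

Definition VJ (J : nat -> {set Pl}) (n : nat) : pred XV :=
  fun u => u.2 == J n.
Definition VgeJ (v0 : V) (J : nat -> {set Pl}) (n : nat) : pred XV :=
  fun u => [exists m : 'I_(NN v0).+1, (n <= m) && (u.2 == J m)].

Definition lam0 : XV -> enat :=
  fun u => if Xowner u \in u.2 then Some 0 else None.

Definition update (lam : XV -> enat) (A : pred XV) : XV -> enat :=
  fun u =>
    if A u then
      if Xowner u \in u.2 then Some 0
      else enat_succ (enat_inf (fun x => exists u', Xedge u u' /\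
             x = enat_sup (fun c => exists r, [/\ play r, r 0 = u',
                                 consistent lam r & c = Cost (Xowner u) r])))
    else lam u.

Definition step (v0 : V) (J : nat -> {set Pl}) (p : (XV -> enat) * nat)
  : (XV -> enat) * nat :=
  let lam := p.1 in let n := p.2 in
  let lam' := update lam (VgeJ v0 J n) in
  (lam', if [forall u, lam' u == lam u] && (1 < n) then n.-1 else n).

Fixpoint lamseq (v0 : V) (J : nat -> {set Pl}) (k : nat) : (XV -> enat) * nat :=
  match k with
  | 0 => (lam0, NN v0)
  | k.+1 => step v0 J (lamseq v0 J k)
  end.

Definition lam (v0 : V) (J : nat -> {set Pl}) (k : nat) : XV -> enat :=
  (lamseq v0 J k).1.

(* mR of the restriction of f to A: max of finite values, 0 if none *)
Definition mR (f : XV -> enat) (A : pred XV) : nat :=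
  \max_(u : XV | A u) odflt 0 (f u).

End Game.

From Pilot Require Import Defs.
From mathcomp Require Import all_boot zify.
From Stdlib Require Import ClassicalEpsilon.

Set Implicit Arguments.
Unset Strict Implicit.
Unset Printing Implicit Defensive.

(** A label that becomes finite at [u] is one plus the worst cost, over plays
   consistent with the current labels, that the owner [i] of [u] can guarantee
   from a successor. If every finite label on vertices whose second component
   contains [I(u)] is at most [M], this worst cost is either [+oo] or at most
   [|Pl| (M + |V| + 1)]: on a consistent play that misses [i] for longer, the
   second component is constant on some window of [M + |V| + 1] steps, a vertex
   repeats among its first [|V| + 1] positions, and looping there forever keeps
   the play consistent (each obligation of label at most [M] raised before the
   loop is met inside the window) while [i] is never reached.
   Labels only decrease, so the potential [|V| (|Pl| - |I|) + #{v | lam (v, I)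
   finite}], bounded by [|V| (|Pl| + 1)], grows whenever a label of layer [I]
   becomes finite; iterating [M |-> |Pl| (M + |V| + 1) + 1] that many times from
   [0] stays below [|V| ^ ((|V| + 3) (|Pl| + 2))]. Only the growth of the update
   regions [V^{>= J_(n_k)}] matters, not the order [J] itself. *)

Lemma enat_le_refl a : enat_le a a.
Proof. by case: a => /=. Qed.

Lemma enat_le_trans b a c : enat_le a b -> enat_le b c -> enat_le a c.
Proof. by case: a; case: b; case: c => //= x y z; apply: leq_trans. Qed.

Lemma enat_le_none a : enat_le a None.
Proof. by case: a. Qed.

Lemma enat_succ_le a b : enat_le a b -> enat_le (enat_succ a) (enat_succ b).
Proof. by case: a; case: b. Qed.

Definition asbool (P : Prop) : bool :=
  if excluded_middle_informative P then true else false.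

Lemma asboolP (P : Prop) : reflect P (asbool P).
Proof. by rewrite /asbool; case: excluded_middle_informative => H; constructor. Qed.

Lemma is_lub_exists S : exists s, is_lub S s.
Proof.
case: (excluded_middle_informative (exists m, forall x, S x -> enat_le x (Some m)))
  => [bdd|unbdd].
- have bddb : exists m, asbool (forall x, S x -> enat_le x (Some m)).
    by case: bdd => m ub; exists m; apply/asboolP.
  exists (Some (ex_minn bddb)); case: ex_minnP => m /asboolP ub least.
  by split=> // [[t|]] ubt //=; apply/least/asboolP.
- exists None; split=> [x _|[t|] ubt //]; first exact: enat_le_none.
  by case: unbdd; exists t.
Qed.

Lemma is_glb_exists S : exists s, is_glb S s.
Proof.
case: (excluded_middle_informative (exists m, S (Some m))) => [fin|nofin].
- have finb : exists m, asbool (S (Some m)).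
    by case: fin => m Sm; exists m; apply/asboolP.
  exists (Some (ex_minn finb)); case: ex_minnP => m /asboolP Sm least.
  by split=> [[x|] Sx|t lb] //=; [apply/least/asboolP | apply: lb].
- exists None; split=> [[x|] Sx|t _] //=; last exact: enat_le_none.
  by case: nofin; exists x.
Qed.

Lemma enat_le_sup S x : S x -> enat_le x (enat_sup S).
Proof. exact: (epsilon_spec _ _ (is_lub_exists S)).1. Qed.

Lemma enat_sup_le S b : (forall x, S x -> enat_le x b) -> enat_le (enat_sup S) b.
Proof. exact: (epsilon_spec _ _ (is_lub_exists S)).2. Qed.

Lemma enat_inf_le S x : S x -> enat_le (enat_inf S) x.
Proof. exact: (epsilon_spec _ _ (is_glb_exists S)).1. Qed.

Lemma enat_le_inf S b : (forall x, S x -> enat_le b x) -> enat_le b (enat_inf S).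
Proof. exact: (epsilon_spec _ _ (is_glb_exists S)).2. Qed.

Lemma enat_inf_Some S y : enat_inf S = Some y -> S (Some y).
Proof.
move=> infE; case: (excluded_middle_informative (S (Some y))) => // notSy.
suff : enat_le (Some y.+1) (enat_inf S) by rewrite infE /= ltnn.
apply: enat_le_inf => -[x|] Sx //=; have := enat_inf_le Sx.
by rewrite infE /= leq_eqVlt => /orP[/eqP yx|//]; rewrite yx in notSy.
Qed.

Lemma least_index_Some (P : pred nat) c :
  least_index P = Some c -> P c /\ forall k, P k -> c <= k.
Proof.
by rewrite /least_index; case: excluded_middle_informative => // ex [<-]; case: ex_minnP.
Qed.

Lemma least_index_le (P : pred nat) k : P k -> enat_le (least_index P) (Some k).
Proof.
rewrite /least_index; case: excluded_middle_informative => [ex|noex] Pk.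
  by case: ex_minnP => m _; apply.
by case: noex; exists k.
Qed.

Lemma least_index_None (P : pred nat) : (forall k, ~~ P k) -> least_index P = None.
Proof.
move=> notP; rewrite /least_index.
by case: excluded_middle_informative => // -[k Pk]; move: (notP k); rewrite Pk.
Qed.

Lemma chain_stalls (T : finType) (X : nat -> {set T}) n :
  (forall q, X q \subset X q.+1) -> #|X n| < n -> exists2 q, q < n & X q = X q.+1.
Proof.
move=> incr; elim: n => [//|n IH] small.
have [eqX|neX] := eqVneq (X n) (X n.+1); first by exists n.
have lt : #|X n| < #|X n.+1| by apply: proper_card; rewrite properEneq neX incr.
by have [q qn eqq] := IH (leq_trans lt small); exists q => //; apply: ltnW.
Qed.

Lemma exists_repeat (T : finType) (f : nat -> T) s :
  exists a b, [/\ s <= a, a < b, b <= s + #|T| & f a = f b].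
Proof.
pose g (t : 'I_#|T|.+1) := f (s + t).
have [x [y neq gxy]] : exists x, exists2 y, x != y & g x = g y.
  by apply/injectivePn/injectiveP => /leq_card; rewrite card_ord ltnn.
wlog xy : x y neq gxy / x < y.
  move=> gen; case: (ltngtP x y) => [|yx|/val_inj exy]; first exact: gen.
    by apply: (gen y x) => //; rewrite eq_sym.
  by rewrite exy eqxx in neq.
exists (s + x), (s + y); split=> //; first exact: leq_addr.
  by rewrite ltn_add2l.
by rewrite leq_add2l -ltnS.
Qed.

(* For [a < b], [lasso a b] enumerates [0, ..., b - 1] and then cycles
   through [a, ..., b - 1]. *)
Fixpoint lasso (a b t : nat) : nat :=
  if t is t'.+1 then
    if (lasso a b t').+1 == b then a else (lasso a b t').+1
  else 0.

Lemma lasso_id a b t : t < b -> lasso a b t = t.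
Proof. by elim: t => //= t IH tb; rewrite IH ?(ltnW tb) // (ltn_eqF tb). Qed.

Lemma lasso_lt a b t : a < b -> lasso a b t < b.
Proof.
move=> ab; elim: t => [|t IH] /=; first exact: leq_ltn_trans (leq0n a) ab.
by case: eqP => // /eqP ne; rewrite ltn_neqAle ne IH.
Qed.

Lemma lasso_below a b t : lasso a b t < a -> lasso a b t = t.
Proof. by elim: t => //= t IH; case: eqP => [_|_ /ltnW /IH -> //]; rewrite ltnn. Qed.

Lemma lasso_step (T : Type) (f : nat -> T) a b t :
  f a = f b -> f (lasso a b t.+1) = f (lasso a b t).+1.
Proof. by move=> fab /=; case: eqP => // ->. Qed.

Definition next_bound (p n M : nat) : nat := p * (M + n + 1) + 1.

Definition label_bound (p n t : nat) : nat := iter t (next_bound p n) 0.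

Lemma label_bound_mono p n : {homo label_bound p n : s t / s <= t}.
Proof.
apply: homo_leq leqnn leq_trans _; elim=> [//|t IH] /=.
by rewrite leq_add2r leq_mul2l leq_add2r leq_add2r IH orbT.
Qed.

Lemma label_bound_exp p n t : 1 < n -> p <= n ->
  label_bound p n t + (n + 6) <= n ^ t * (n + 6).
Proof.
move=> n2 pn; elim: t => [|t IH]; first by rewrite expn0 mul1n.
rewrite /label_bound iterS -/(label_bound p n t) /next_bound expnS -mulnA.
have := leq_mul (leqnn n) IH.
have : p * (label_bound p n t + n + 1) <= n * (label_bound p n t + n + 1).
  exact: leq_mul.
nia.
Qed.

Lemma label_bound_le p n t : 1 < n -> p <= n -> t <= n * p.+1 ->
  label_bound p n t <= n ^ ((n + 3) * (p + 2)).
Proof.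
move=> n2 pn tle; apply: leq_trans (label_bound_mono p n tle) _.
have n3 : n + 6 <= n ^ 3 by rewrite !expnS expn0 muln1; nia.
have step := label_bound_exp (n * p.+1) n2 pn.
apply: leq_trans (_ : n ^ (n * p.+1) * n ^ 3 <= _).
  exact: leq_trans (leq_addr _ _) (leq_trans step (leq_mul (leqnn _) n3)).
by rewrite -expnD leq_pexp2l ?(ltnW n2) //; nia.
Qed.

Section ExtendedGame.
Variables (Pl V : finType) (owner : V -> Pl) (E : rel V) (F : Pl -> {set V}).
Local Notation XV := (XV Pl V).
Local Notation Xedge := (Xedge E F).
Local Notation play := (play E F).
Local Notation consistent := (consistent owner).
Local Notation Xowner := (Xowner owner).
Local Notation update := (update owner E F).

Lemma Xedge_subset (u w : XV) : Xedge u w -> u.2 \subset w.2.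
Proof. by case/andP=> _ /eqP->; exact: subsetUl. Qed.

Lemma play_subset r s t : play r -> s <= t -> (r s).2 \subset (r t).2.
Proof.
move=> pr /subnK <-; elim: (t - s) => [|d IH]; first exact: subxx.
exact: subset_trans IH (Xedge_subset (pr _)).
Qed.

Lemma consistent_reach lam r t m : consistent lam r -> lam (r t) = Some m ->
  exists2 c, c <= m & Xowner (r t) \in (r (t + c)).2.
Proof.
move=> cons lamE; have := cons t _ erefl; rewrite lamE.
case costE: (Cost _ _) => [c|] //= cm.
by exists c => //; have [+ _] := least_index_Some costE; rewrite inE.
Qed.

Lemma play_stable_window r i W c : play r ->
  (forall t, t < c -> i \notin (r t).2) -> #|Pl| * W < c ->
  exists2 s, s + W < c & forall t, s <= t <= s + W -> (r t).2 = (r s).2.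
Proof.
move=> pr avoid large.
have [q qP eqq] : exists2 q, q < #|Pl| & (r (q * W)).2 = (r (q.+1 * W)).2.
  apply: chain_stalls => [q|]; first by apply: play_subset pr _; rewrite mulSnr leq_addr.
  have sub : (r (#|Pl| * W)).2 \subset [set~ i].
    apply/subsetP => j jin; rewrite in_setC1; apply: contraTneq jin => ->.
    exact: avoid large.
  have Pl_pos : 0 < #|Pl| by apply/card_gt0P; exists i.
  by have := subset_leq_card sub; rewrite cardsC1; lia.
exists (q * W) => [|t /andP[st ts]].
  by apply: leq_ltn_trans large; rewrite -mulSnr leq_mul2r qP orbT.
apply/eqP; rewrite eqEsubset (play_subset pr st) andbT eqq.
by apply: play_subset pr _; rewrite mulSnr.
Qed.

Lemma play_lasso r a b : play r -> r a = r b -> play (fun t => r (lasso a b t)).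
Proof. by move=> pr rab t; rewrite (lasso_step t rab); exact: pr. Qed.

Lemma Cost_lasso (r : nat -> XV) (i : Pl) a b :
  a < b -> (forall t, t < b -> i \notin (r t).2) ->
  Cost i (fun t : nat => r (lasso a b t)) = None.
Proof.
by move=> ab avoid; apply: least_index_None => t; rewrite inE avoid // lasso_lt.
Qed.

Lemma consistent_lasso lam r a b :
  play r -> consistent lam r -> a < b -> r a = r b ->
  (forall t, a <= t <= b -> (r t).2 = (r b).2) ->
  (forall t m, t < b -> lam (r t) = Some m -> Xowner (r t) \in (r b).2) ->
  consistent lam (fun t => r (lasso a b t)).
Proof.
move=> pr cons ab rab loopI settled t _ <- /=.
case lamE: (lam _) => [m|]; last exact: enat_le_none.
have [own|notown] := boolP (Xowner (r (lasso a b t)) \in (r (lasso a b t)).2).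
  apply: enat_le_trans (_ : enat_le _ (Some 0)) _ => //.
  by apply: least_index_le; rewrite inE /Defs.suffix addn0.
have pa : lasso a b t < a.
  rewrite ltnNge; apply: contraNN notown => ap.
  by rewrite loopI ?ap ?(ltnW (lasso_lt _ ab)) // (settled _ _ (lasso_lt _ ab) lamE).
have tE := lasso_below pa; rewrite tE in lamE notown pa *.
have ja : Xowner (r t) \in (r a).2.
  by rewrite loopI ?leqnn ?(ltnW ab) // (settled _ _ (ltn_trans pa ab) lamE).
have := cons t _ erefl; rewrite lamE.
have : enat_le (Cost (Xowner (r t)) (Defs.suffix r t)) (Some (a - t)).
  by apply: least_index_le; rewrite inE /Defs.suffix subnKC // ltnW.
case costE: (Cost _ _) => [c|] //= ca cm.
have [jc _] := least_index_Some costE.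
apply: enat_le_trans (_ : enat_le _ (Some c)) _ => //.
apply: least_index_le; move: jc; rewrite !inE /Defs.suffix lasso_id //; lia.
Qed.

Lemma pump lam M i r c : play r -> consistent lam r ->
  (forall t m, lam (r t) = Some m -> m <= M) ->
  Cost i r = Some c -> #|Pl| * (M + #|V| + 1) < c ->
  exists r', [/\ play r', r' 0 = r 0, consistent lam r' & Cost i r' = None].
Proof.
move=> pr cons boundM costE large.
have avoid t : t < c -> i \notin (r t).2.
  move=> tc; apply: contraTN tc => it.
  by rewrite -leqNgt (least_index_Some costE).2 // inE.
have [s sc stable] := play_stable_window pr avoid large.
have [a [b [sa ab bs fab]]] := exists_repeat (fun t => (r t).1) s.
have loopI t : a <= t <= b -> (r t).2 = (r b).2.
  case/andP=> lo hi; rewrite (stable t) ?(stable b) //; apply/andP; split; lia.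
have rab : r a = r b.
  by rewrite [r a]surjective_pairing [r b]surjective_pairing fab loopI // leqnn ltnW.
exists (fun t => r (lasso a b t)); split=> //; first exact: play_lasso.
  apply: consistent_lasso => // t m tb lamE.
  have [d dm reach] := consistent_reach cons lamE.
  have mM := boundM _ _ lamE.
  have [tdb|btd] := leqP (t + d) b; first exact: subsetP (play_subset pr tdb) _ reach.
  rewrite (stable b) -?(stable (t + d)) //; apply/andP; split; lia.
by apply: Cost_lasso => // t tb; apply: avoid; lia.
Qed.

Definition worst_cost (lam : XV -> enat) (i : Pl) (u : XV) : enat :=
  enat_sup (fun c => exists r, [/\ play r, r 0 = u, consistent lam r & c = Cost i r]).

Lemma worst_cost_bounded (lam : XV -> enat) M (i : Pl) (u : XV) y :
  (forall (w : XV) m, u.2 \subset w.2 -> lam w = Some m -> m <= M) ->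
  worst_cost lam i u = Some y -> y <= #|Pl| * (M + #|V| + 1).
Proof.
move=> boundM wcE.
have costN r : play r -> r 0 = u -> consistent lam r -> Cost i r <> None.
  move=> pr r0 cons costE.
  have : enat_le None (worst_cost lam i u) by apply: enat_le_sup; exists r.
  by rewrite wcE.
suff : enat_le (worst_cost lam i u) (Some (#|Pl| * (M + #|V| + 1))) by rewrite wcE.
apply: enat_sup_le => _ [r [pr r0 cons ->]].
case costE: (Cost i r) => [c|]; last by case: (costN r).
rewrite /= leqNgt; apply/negP => large.
have boundr t m : lam (r t) = Some m -> m <= M.
  by apply: boundM; rewrite -r0; apply: play_subset.
have [r' [pr' r0' cons' costE']] := pump pr cons boundr costE large.
by apply: (costN r') => //; rewrite r0'.
Qed.

Lemma worst_cost_anti (lam lam' : XV -> enat) (i : Pl) (u : XV) :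
  (forall w, enat_le (lam' w) (lam w)) ->
  enat_le (worst_cost lam' i u) (worst_cost lam i u).
Proof.
move=> le; apply: enat_sup_le => _ [r [pr r0 cons ->]]; apply: enat_le_sup.
by exists r; split=> // n j nj; apply: enat_le_trans (cons n j nj) (le _).
Qed.

Lemma update_bounded (lam : XV -> enat) (A : pred XV) M (u : XV) x :
  (forall (w : XV) m, u.2 \subset w.2 -> lam w = Some m -> m <= M) ->
  A u -> Xowner u \notin u.2 -> update lam A u = Some x ->
  x <= next_bound #|Pl| #|V| M.
Proof.
move=> boundM Au notown; rewrite /update Au (negbTE notown).
case infE: (enat_inf _) => [y|] //= [<-].
have [u' [uu' yE]] := enat_inf_Some infE.
rewrite /next_bound addn1 ltnS; apply: worst_cost_bounded (esym yE).
by move=> w m sub; apply: boundM; exact: subset_trans (Xedge_subset uu') sub.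
Qed.

Lemma update_anti (lam lam' : XV -> enat) (A : pred XV) (u : XV) :
  (forall w, enat_le (lam' w) (lam w)) ->
  enat_le (update lam' A u) (update lam A u).
Proof.
move=> le; rewrite /update; case: (A u); last exact: le.
case: ifP => // _; apply: enat_succ_le; apply: enat_le_inf => _ [u' [uu' ->]].
apply: enat_le_trans (worst_cost_anti _ _ le).
by apply: enat_inf_le; exists u'.
Qed.

Lemma update_le_lam0 (lam : XV -> enat) (A : pred XV) (u : XV) :
  A u -> enat_le (update lam A u) (lam0 owner u).
Proof.
by move=> Au; rewrite /update /lam0 Au; case: ifP => // _; exact: enat_le_none.
Qed.
End ExtendedGame.

Section Iteration.
Variables (Pl V : finType) (owner : V -> Pl) (E : rel V) (F : Pl -> {set V}).
Variables (A : nat -> pred (XV Pl V)) (lamk : nat -> XV Pl V -> enat).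
Hypothesis A_grow : forall k u, A k u -> A k.+1 u.
Hypothesis lamk0 : lamk 0 = lam0 owner.
Hypothesis lamkS : forall k, lamk k.+1 = update owner E F (lamk k) (A k).

Lemma lamk_outside k u : ~~ A k u -> lamk k.+1 u = lam0 owner u.
Proof.
elim: k => [|k IH] notA; rewrite lamkS /update (negbTE notA) ?lamk0 //.
by apply: IH; apply: contra notA; exact: A_grow.
Qed.

Lemma lamk_antitone k u : enat_le (lamk k.+1 u) (lamk k u).
Proof.
elim: k u => [|k IH] u.
  rewrite lamkS lamk0; have [Au|nAu] := boolP (A 0 u); first exact: update_le_lam0.
  by rewrite /update (negbTE nAu) enat_le_refl.
rewrite lamkS; have [Au'|nAu'] := boolP (A k.+1 u); last first.
  by rewrite /update (negbTE nAu') enat_le_refl.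
have [Au|nAu] := boolP (A k u); last by rewrite lamk_outside //; exact: update_le_lam0.
rewrite [in X in enat_le _ X]lamkS.
by move: (update_anti owner E F (A k.+1) u IH); rewrite /update Au Au'.
Qed.

Definition finite_part k (I : {set Pl}) : {set V} :=
  [set v | lamk k (v, I) != None].

Definition potential k (I : {set Pl}) : nat :=
  #|V| * (#|Pl| - #|I|) + #|finite_part k I|.

Lemma finite_part_subset k I : finite_part k I \subset finite_part k.+1 I.
Proof.
apply/subsetP => v; rewrite !inE.
by have := lamk_antitone k (v, I); case: (lamk k.+1 _); case: (lamk k _).
Qed.

Lemma potential_le_succ k I : potential k I <= potential k.+1 I.
Proof. by rewrite leq_add2l subset_leq_card // finite_part_subset. Qed.

Lemma potential_lt_succ k u :
  lamk k u = None -> lamk k.+1 u != None -> potential k u.2 < potential k.+1 u.2.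
Proof.
move=> oldN newS; rewrite ltn_add2l; apply: proper_card; apply/properP.
split; first exact: finite_part_subset.
by exists u.1; rewrite !inE -surjective_pairing ?oldN.
Qed.

Lemma potential_subset k (I I' : {set Pl}) :
  I \subset I' -> potential k I' <= potential k I.
Proof.
move=> sub; have [->//|ne] := eqVneq I I'.
have lt : #|I| < #|I'| by apply: proper_card; rewrite properEneq ne sub.
have := max_card I'; have := max_card (finite_part k I'); rewrite /potential; nia.
Qed.

Lemma potential_le k I : potential k I <= #|V| * #|Pl|.+1.
Proof. by rewrite /potential mulnS addnC leq_add ?leq_mul ?leq_subr ?max_card. Qed.

Lemma lamk_bound k u x :
  lamk k u = Some x -> x <= label_bound #|Pl| #|V| (potential k u.2).
Proof.
elim: k u x => [|k IH] u x; first by rewrite lamk0 /lam0; case: ifP => // _ [<-].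
move=> lamE; case oldE: (lamk k u) => [y|].
  have := lamk_antitone k u; rewrite lamE oldE /= => xy.
  apply: leq_trans xy (leq_trans (IH _ _ oldE) _).
  exact/label_bound_mono/potential_le_succ.
have Au : A k u.
  by apply: contraT => nAu; move: lamE; rewrite lamkS /update (negbTE nAu) oldE.
have [own|notown] := boolP (Xowner owner u \in u.2).
  by move: lamE; rewrite lamkS /update Au own => -[<-].
have boundk (w : XV Pl V) m : u.2 \subset w.2 -> lamk k w = Some m ->
    m <= label_bound #|Pl| #|V| (potential k u.2).
  move=> sub /IH mle; apply: leq_trans mle _.
  exact/label_bound_mono/potential_subset.
have newE : update owner E F (lamk k) (A k) u = Some x by rewrite -lamkS.
apply: leq_trans (update_bounded boundk Au notown newE) _.
have grown : potential k u.2 < potential k.+1 u.2 by rewrite potential_lt_succ ?lamE.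
exact: (label_bound_mono _ _ grown).
Qed.
End Iteration.

Lemma VgeJ_antitone (Pl V : finType) (E : rel V) (F : Pl -> {set V}) v0 J m n u :
  m <= n -> VgeJ E F v0 J n u -> VgeJ E F v0 J m u.
Proof.
move=> mn /existsP[j /andP[nj uj]]; apply/existsP; exists j.
by rewrite (leq_trans mn nj).
Qed.

Lemma lamseq_index_le_succ (Pl V : finType) (owner : V -> Pl) E F v0 J k :
  (lamseq owner E F v0 J k.+1).2 <= (lamseq owner E F v0 J k).2.
Proof. by rewrite /= /step /=; case: ifP => // _; exact: leq_pred. Qed.

Theorem corollary3p12 :
  exists C : nat,
  forall (Pl V : finType) (owner : V -> Pl) (E : rel V) (F : Pl -> {set V}) (v0 : V),
    1 < #|V| -> #|Pl| <= #|V| -> (forall v, exists v', E v v') ->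
    forall J : nat -> {set Pl}, valid_order E F v0 J ->
    forall (k l : nat), 1 <= l <= NN E F v0 ->
      mR (lam owner E F v0 J k) (VJ J l)
        <= C * #|V| ^ ((#|V| + 3) * (#|Pl| + 2)) /\
      mR (lam owner E F v0 J k) (VgeJ E F v0 J l)
        <= C * #|V| ^ ((#|V| + 3) * (#|Pl| + 2)).
Proof.
exists 1 => Pl V owner E F v0 V2 PlV _ J _ k l _.
pose A j := VgeJ E F v0 J (lamseq owner E F v0 J j).2.
have A_grow j u : A j u -> A j.+1 u by apply/VgeJ_antitone/lamseq_index_le_succ.
have bound u : odflt 0 (lam owner E F v0 J k u) <= 1 * #|V| ^ ((#|V| + 3) * (#|Pl| + 2)).
  case lamE: (lam _ _ _ _ _ _ u) => [x|] //=.
  apply: leq_trans (lamk_bound A_grow (erefl _) (fun=> erefl _) lamE) _.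
  by rewrite mul1n label_bound_le ?potential_le.
by split; apply/bigmax_leqP => u _; exact: bound.
Qed.
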